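(* Let $b=1/2$, let $\mathcal B$ be a Hamel basis of $\mathbb{R}$ over $\mathbb{Q}$ with $b\in\mathcal B$, and let $\pi:\mathbb{R}\to[0,1]$ be defined by $\pi(x)=\lambda^x_b-\lfloor\lambda^x_b\rfloor$ if $\lambda^x_b$ is not an odd integer, and $\pi(x)=1$ if $\lambda^x_b$ is an odd integer. Then $\pi$ is an extreme function for $I_b$: whenever $\pi_1,\pi_2:\mathbb{R}\to\mathbb{R}_+$ are valid functions for $I_b$ with $\pi=\tfrac12\pi_1+\tfrac12\pi_2$, we have $\pi_1=\pi_2=\pi$.
   Context: For $b\in\mathbb{R}\setminus\mathbb{Z}$, $I_b$ is the set of finite-support functions $y:\mathbb{R}\to\mathbb{Z}_+$ (i.e. $y(x)=0$ for all but finitely many $x$) such that $\sum_{x\in\mathbb{R}} y(x)\,x\equiv b \pmod 1$. A function $\pi:\mathbb{R}\to\mathbb{R}_+$ is a (nonnegative) valid function for $I_b$ if $\sum_{x\in\mathbb{R}}\pi(x)y(x)\ge 1$ for every $y\in I_b$. A Hamel basis is a basis of $\mathbb{R}$ as a vector space over $\mathbb{Q}$; for $x\in\mathbb{R}$, $\lambda^x_b\in\mathbb{Q}$ denotes the coefficient of the basis element $b$ in the unique expression of $x$ as a finite rational linear combination of elements of $\mathcal B$. *)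

From Stdlib Require Import Reals QArith Qround Qreals ZArith List Classical ClassicalEpsilon.
Open Scope R_scope.

Definition lsum (l : list R) (f : R -> R) : R :=
  fold_right (fun r acc => f r + acc) 0 l.

Definition represents (B : R -> Prop) (c : R -> Q) (x : R) : Prop :=
  exists l : list R, NoDup l /\ (forall r, In r l -> B r) /\
    (forall r, ~ In r l -> (c r == 0)%Q) /\
    x = lsum l (fun r => Q2R (c r) * r).

Definition is_Hamel_basis (B : R -> Prop) : Prop :=
  (forall x, exists c, represents B c x) /\
  (forall c, represents B c 0 -> forall r, (c r == 0)%Q).

(* lambda^x_b : the coefficient of b in the (unique) expansion of x. *)
Definition hamel_coef (B : R -> Prop) (b x : R) : Q :=
  (epsilon (inhabits (fun _ : R => 0%Q)) (fun c => represents B c x)) b.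

(* y : R -> nat is finitely supported with support in the NoDup list l
   (any such l gives the same sums). *)
Definition support_in (y : R -> nat) (l : list R) : Prop :=
  NoDup l /\ (forall x, y x <> 0%nat -> In x l).

Definition in_Ib (b : R) (y : R -> nat) (l : list R) : Prop :=
  exists k : Z, lsum l (fun x => INR (y x) * x) - b = IZR k.

Definition valid (b : R) (p : R -> R) : Prop :=
  (forall x, 0 <= p x) /\
  (forall (y : R -> nat) (l : list R), support_in y l -> in_Ib b y l ->
      lsum l (fun x => p x * INR (y x)) >= 1).

Definition extreme (b : R) (p : R -> R) : Prop :=
  valid b p /\
  forall p1 p2 : R -> R, valid b p1 -> valid b p2 ->
    (forall x, p x = /2 * p1 x + /2 * p2 x) ->
    (forall x, p1 x = p x) /\ (forall x, p2 x = p x).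

Definition is_odd_integer (q : Q) : Prop :=
  exists k : Z, (q == inject_Z (2 * k + 1))%Q.

Definition pi_half (B : R -> Prop) (x : R) : R :=
  let q := hamel_coef B (/2) x in
  match excluded_middle_informative (is_odd_integer q) with
  | left _ => 1
  | right _ => Q2R (q - inject_Z (Qfloor q))
  end.

From Stdlib Require Import Reals QArith Qreals Qround ZArith List Permutation Lra Lia Classical ClassicalEpsilon.
Open Scope R_scope.

(* Write lam x for the coefficient of 1/2 in x. It is Q-linear with lam (1/2) = 1, hence
   lam k = 2k for integers k, and pi x depends only on lam x: it is 1 at odd integers and
   the fractional part elsewhere. If the points x_i (with multiplicity) sum to 1/2 mod 1,
   then sum lam x_i is odd. Validity: either some lam x_i is odd and pi x_i = 1, or
   sum pi x_i differs from that odd number by an integer, is nonnegative, and cannot be 0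
   since then every lam x_i would be even.
   Extremality: call a multiset tight if its lam-sum is odd and its pi-sum is 1. Adding the
   point 1/2 - sum x_i, where lam is even and pi vanishes (so pi_1 and pi_2 vanish too),
   turns it into a solution, so pi_1 and pi_2 are >= 1 on it and hence both sum to 1.
   With the points 1/(2s), for which lam = 1/s, the tight multisets
   {x} + copies of 1/(2s), {x, x} + copies of 1/(2s) and {x, w} with lam w = 1 - lam x
   determine pi_1 x = pi x in every case. *)

Lemma lsum_nil f : lsum nil f = 0.
Proof. reflexivity. Qed.

Lemma lsum_cons a l f : lsum (a :: l) f = f a + lsum l f.
Proof. reflexivity. Qed.

Lemma lsum_app l1 l2 f : lsum (l1 ++ l2) f = lsum l1 f + lsum l2 f.
Proof. induction l1; simpl; [ring | rewrite IHl1; ring]. Qed.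

Lemma lsum_ext l f g : (forall x, f x = g x) -> lsum l f = lsum l g.
Proof. intros H; induction l; simpl; [reflexivity | rewrite H, IHl; reflexivity]. Qed.

Lemma lsum_plus l f g : lsum l (fun x => f x + g x) = lsum l f + lsum l g.
Proof. induction l; simpl; [ring | rewrite IHl; ring]. Qed.

Lemma lsum_scal l c f : lsum l (fun x => c * f x) = c * lsum l f.
Proof. induction l; simpl; [ring | rewrite IHl; ring]. Qed.

Lemma lsum_repeat a n f : lsum (repeat a n) f = INR n * f a.
Proof. induction n; simpl; [ring | rewrite IHn; destruct n; simpl; ring]. Qed.

Lemma lsum_zero l f : (forall x, In x l -> f x = 0) -> lsum l f = 0.
Proof. induction l; simpl; intros H; [reflexivity |]. rewrite H, IHl; auto. ring. Qed.

Lemma lsum_nonneg l f : (forall x, In x l -> 0 <= f x) -> 0 <= lsum l f.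
Proof.
  induction l; simpl; intros H; [lra |].
  pose proof (H a (or_introl eq_refl)). pose proof (IHl (fun x h => H x (or_intror h))). lra.
Qed.

Lemma lsum_ge_in l f a : (forall x, In x l -> 0 <= f x) -> In a l -> f a <= lsum l f.
Proof.
  induction l; simpl; intros H Ha; [contradiction |].
  pose proof (H a0 (or_introl eq_refl)). pose proof (lsum_nonneg l f (fun x h => H x (or_intror h))).
  destruct Ha as [-> | Ha]; [lra |].
  pose proof (IHl (fun x h => H x (or_intror h)) Ha). lra.
Qed.

Lemma lsum_perm l l' f : Permutation l l' -> lsum l f = lsum l' f.
Proof. induction 1; simpl; lra. Qed.

Lemma lsum_extend (l L : list R) h : NoDup l -> NoDup L -> incl l L ->
  (forall r, In r L -> ~ In r l -> h r = 0) -> lsum L h = lsum l h.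
Proof.
  revert L. induction l as [| a l IH]; intros L Hl HL Hinc Hz.
  - apply lsum_zero. intros x Hx; apply Hz; auto.
  - assert (Ha : In a L) by (apply Hinc; simpl; auto).
    destruct (in_split a L Ha) as [u [v ->]].
    rewrite (lsum_perm _ (a :: u ++ v)) by (apply Permutation_sym, Permutation_middle).
    inversion Hl; subst. simpl. rewrite (IH (u ++ v)); auto.
    + eapply NoDup_remove_1; eauto.
    + intros r Hr. assert (Hr' : In r (u ++ a :: v)) by (apply Hinc; simpl; auto).
      rewrite in_app_iff in *. destruct Hr' as [? | [-> | ?]]; tauto.
    + intros r Hr Hn. apply Hz.
      * rewrite in_app_iff in *; simpl; tauto.
      * intros [-> | E]; [apply (NoDup_remove_2 _ _ _ HL) | contradiction]; auto.
Qed.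

Lemma lsum_flat_repeat (l : list R) (y : R -> nat) h :
  lsum (flat_map (fun x => repeat x (y x)) l) h = lsum l (fun x => INR (y x) * h x).
Proof. induction l; simpl; auto. rewrite lsum_app, lsum_repeat, IHl; auto. Qed.

Lemma lsum_indicator (l : list R) a h : NoDup l -> In a l ->
  lsum l (fun x => (if Req_dec_T a x then 1 else 0) * h x) = h a.
Proof.
  induction l as [| b l IH]; intros Hl Ha; [contradiction |]. inversion Hl; subst; simpl.
  destruct (Req_dec_T a b) as [-> | Hab].
  - rewrite lsum_zero; [ring |]. intros x Hx.
    destruct (Req_dec_T b x); [subst; contradiction | ring].
  - destruct Ha as [-> | Ha]; [congruence |]. rewrite IH; auto. ring.
Qed.

Lemma lsum_count_occ (xs l : list R) h : NoDup l -> incl xs l ->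
  lsum l (fun x => INR (count_occ Req_dec_T xs x) * h x) = lsum xs h.
Proof.
  revert l. induction xs as [| a xs IH]; intros l Hl Hinc.
  - apply lsum_zero. intros; simpl; ring.
  - rewrite (lsum_ext l _ (fun x => (if Req_dec_T a x then 1 else 0) * h x +
        INR (count_occ Req_dec_T xs x) * h x)).
    + rewrite lsum_plus, lsum_indicator, IH; auto.
      * intros r Hr; apply Hinc; simpl; auto.
      * apply Hinc; simpl; auto.
    + intros x. simpl. destruct (Req_dec_T a x); [rewrite S_INR |]; ring.
Qed.

Definition valid_multiset (b : R) (p : R -> R) : Prop :=
  forall xs : list R, (exists k, lsum xs (fun x => x) - b = IZR k) -> lsum xs p >= 1.

Lemma valid_multiset_of_valid b p : valid b p -> valid_multiset b p.
Proof.
  intros [_ Hv] xs [k Hk].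
  set (y := count_occ Req_dec_T xs). set (l := nodup Req_dec_T xs).
  assert (Hl : NoDup l) by apply NoDup_nodup.
  assert (Hinc : incl xs l) by (intros r Hr; apply nodup_In; auto).
  assert (Hsupp : support_in y l).
  { split; auto. intros x Hx. apply nodup_In.
    destruct (In_dec Req_dec_T x xs) as [| Hn]; [auto | now apply (count_occ_not_In Req_dec_T) in Hn]. }
  assert (Hsum : lsum l (fun x => INR (y x) * x) = lsum xs (fun x => x))
    by exact (lsum_count_occ xs l (fun x => x) Hl Hinc).
  assert (Hp : lsum l (fun x => p x * INR (y x)) = lsum xs p).
  { rewrite <- (lsum_count_occ xs l p) by auto. apply lsum_ext; intros; unfold y; ring. }
  rewrite <- Hp. apply Hv; auto. exists k. rewrite Hsum; auto.
Qed.

Lemma valid_of_valid_multiset b p : (forall x, 0 <= p x) -> valid_multiset b p -> valid b p.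
Proof.
  intros Hnn Hv. split; auto. intros y l _ [k Hk].
  set (xs := flat_map (fun x => repeat x (y x)) l).
  assert (Hsum : lsum xs (fun x => x) = lsum l (fun x => INR (y x) * x))
    by apply lsum_flat_repeat.
  assert (Hp : lsum xs p = lsum l (fun x => p x * INR (y x))).
  { unfold xs; rewrite lsum_flat_repeat. apply lsum_ext; intros; ring. }
  rewrite <- Hp. apply Hv. exists k. rewrite Hsum; auto.
Qed.

Lemma Q2R_inject_Z z : Q2R (inject_Z z) = IZR z.
Proof. unfold Q2R, inject_Z; simpl. field. Qed.

Lemma Q2R_eq0 q : (q == 0)%Q -> Q2R q = 0.
Proof. intros H; rewrite (Qeq_eqR _ _ H); apply RMicromega.Q2R_0. Qed.

Lemma represents_add B c c' x y : represents B c x -> represents B c' y ->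
  represents B (fun r => c r + c' r)%Q (x + y).
Proof.
  intros [l [Hl [HlB [Hlz ->]]]] [l' [Hl' [HlB' [Hlz' ->]]]].
  set (L := nodup Req_dec_T (l ++ l')).
  assert (HL : NoDup L) by apply NoDup_nodup.
  assert (HinL : forall r, In r L <-> In r l \/ In r l')
    by (intro r; unfold L; rewrite nodup_In, in_app_iff; tauto).
  assert (Hwiden : forall l0 (d : R -> Q), NoDup l0 -> (forall r, In r l0 -> In r L) ->
      (forall r, ~ In r l0 -> (d r == 0)%Q) ->
      lsum l0 (fun r => Q2R (d r) * r) = lsum L (fun r => Q2R (d r) * r)).
  { intros l0 d Hl0 Hinc Hd. symmetry. apply lsum_extend; auto.
    intros r _ Hr. rewrite Q2R_eq0 by auto. ring. }
  exists L. split; [| split; [| split]]; auto.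
  - intros r Hr; apply HinL in Hr as [Hr | Hr]; auto.
  - intros r Hr. rewrite (Hlz r), (Hlz' r) by (rewrite HinL in Hr; tauto). reflexivity.
  - rewrite (Hwiden l c), (Hwiden l' c'), <- lsum_plus by (auto; intro r; rewrite HinL; tauto).
    apply lsum_ext; intro r. rewrite Q2R_plus; ring.
Qed.

Lemma represents_opp B c x : represents B c x -> represents B (fun r => - c r)%Q (- x).
Proof.
  intros [l [Hl [HlB [Hlz ->]]]]. exists l. split; [| split; [| split]]; auto.
  - intros r Hr. rewrite (Hlz r Hr). reflexivity.
  - rewrite <- (Rmult_1_l (lsum _ _)), Ropp_mult_distr_l, <- lsum_scal.
    apply lsum_ext; intro r. rewrite Q2R_opp; ring.
Qed.

Lemma represents_unique B c c' x : is_Hamel_basis B ->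
  represents B c x -> represents B c' x -> forall r, Q2R (c r) = Q2R (c' r).
Proof.
  intros HB Hc Hc' r.
  pose proof (represents_add _ _ _ _ _ Hc (represents_opp _ _ _ Hc')) as Hd.
  rewrite Rplus_opp_r in Hd.
  pose proof (Q2R_eq0 _ (proj2 HB _ Hd r)) as H0.
  rewrite Q2R_plus, Q2R_opp in H0. lra.
Qed.

Definition coef (B : R -> Prop) (b x : R) : R := Q2R (hamel_coef B b x).

Section HamelCoefficient.

Variables (B : R -> Prop) (b : R).
Hypothesis HB : is_Hamel_basis B.

Lemma coef_of_represents c x : represents B c x -> coef B b x = Q2R (c b).
Proof.
  intros Hc. unfold coef, hamel_coef.
  apply (represents_unique B _ _ x HB); [apply epsilon_spec, (proj1 HB) | exact Hc].
Qed.

Lemma coef_add x y : coef B b (x + y) = coef B b x + coef B b y.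
Proof.
  destruct (proj1 HB x) as [c Hc], (proj1 HB y) as [c' Hc'].
  rewrite (coef_of_represents _ _ Hc), (coef_of_represents _ _ Hc'), <- Q2R_plus.
  exact (coef_of_represents _ _ (represents_add _ _ _ _ _ Hc Hc')).
Qed.

Lemma coef_sub x y : coef B b (x - y) = coef B b x - coef B b y.
Proof. pose proof (coef_add (x - y) y) as H. replace (x - y + y) with x in H by ring. lra. Qed.

Lemma coef_lsum xs : coef B b (lsum xs (fun x => x)) = lsum xs (coef B b).
Proof.
  induction xs as [| x xs IH]; simpl.
  - pose proof (coef_add 0 0) as H. rewrite Rplus_0_l in H. lra.
  - rewrite coef_add, <- IH. reflexivity.
Qed.

Hypothesis Hb : B b.

Lemma coef_basis_multiple q : coef B b (Q2R q * b) = Q2R q.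
Proof.
  set (c := fun r => if Req_dec_T r b then q else 0%Q).
  assert (Hcb : c b = q) by (unfold c; destruct (Req_dec_T b b); congruence).
  rewrite (coef_of_represents c), Hcb; auto.
  exists (b :: nil). split; [| split; [| split]].
  - repeat constructor; simpl; tauto.
  - intros r [<- | []]; auto.
  - intros r Hr. unfold c. destruct (Req_dec_T r b) as [-> | _]; [simpl in Hr; tauto | reflexivity].
  - simpl. rewrite Hcb. ring.
Qed.

End HamelCoefficient.

Lemma Q2R_int_frac q : exists m a (s : positive),
  Q2R q = IZR m + IZR a / IZR (Zpos s) /\ (0 <= a < Zpos s)%Z.
Proof.
  destruct q as [n s]. exists (n / Zpos s)%Z, (n mod Zpos s)%Z, s. split.
  - unfold Q2R; simpl. rewrite (Z.div_mod n (Zpos s)) at 1 by lia.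
    rewrite plus_IZR, mult_IZR. field. apply not_0_IZR; lia.
  - apply Z.mod_pos_bound; lia.
Qed.

Lemma IZR_div_bounds a s : (0 < a < s)%Z -> 0 < IZR a / IZR s < 1.
Proof.
  intros H. assert (0 < IZR a) by (apply IZR_lt; lia).
  assert (IZR a < IZR s) by (apply IZR_lt; lia).
  split; [apply Rdiv_lt_0_compat; lra |].
  apply (Rmult_lt_reg_r (IZR s)); [lra |]. unfold Rdiv. rewrite Rmult_assoc, Rinv_l; lra.
Qed.

Section PiHalf.

Variable B : R -> Prop.
Local Notation lam := (coef B (/2)).

Lemma pi_half_odd x k : lam x = IZR (2 * k + 1) -> pi_half B x = 1.
Proof.
  intros H. unfold pi_half. destruct (excluded_middle_informative _) as [_ | Hno]; auto.
  exfalso; apply Hno. exists k. apply eqR_Qeq. rewrite Q2R_inject_Z. exact H.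
Qed.

Lemma pi_half_frac x m r : lam x = IZR m + r -> 0 <= r < 1 ->
  (forall k, lam x <> IZR (2 * k + 1)) -> pi_half B x = r.
Proof.
  intros H Hr Hno. unfold pi_half, coef in *.
  set (q := hamel_coef B (/2) x) in *.
  destruct (excluded_middle_informative _) as [[k Hk] | _].
  - exfalso; apply (Hno k). rewrite (Qeq_eqR _ _ Hk), Q2R_inject_Z; auto.
  - assert (Hfl : Qfloor q = m).
    { pose proof (Qle_Rle _ _ (Qfloor_le q)) as Hle.
      pose proof (Qlt_Rlt _ _ (Qlt_floor q)) as Hlt.
      rewrite Q2R_inject_Z in Hle, Hlt. rewrite plus_IZR in Hlt.
      assert (IZR (Qfloor q) < IZR (m + 1)) by (rewrite plus_IZR; lra).
      assert (IZR m < IZR (Qfloor q + 1)) by (rewrite plus_IZR; lra).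
      apply lt_IZR in H0. apply lt_IZR in H1. lia. }
    rewrite Q2R_minus, Q2R_inject_Z, Hfl. lra.
Qed.

Lemma pi_half_even x k : lam x = IZR (2 * k) -> pi_half B x = 0.
Proof.
  intros H. apply (pi_half_frac x (2 * k)); [lra | lra |].
  intros k' Hk'. rewrite H in Hk'. apply eq_IZR in Hk'. lia.
Qed.

Lemma pi_half_open x m r : lam x = IZR m + r -> 0 < r < 1 -> pi_half B x = r.
Proof.
  intros H Hr. apply (pi_half_frac x m); [auto | lra |].
  intros k Hk. rewrite H in Hk.
  assert (IZR 0 < IZR (2 * k + 1 - m)) by (rewrite minus_IZR; lra).
  assert (IZR (2 * k + 1 - m) < IZR 1) by (rewrite minus_IZR; lra).
  apply lt_IZR in H0. apply lt_IZR in H1. lia.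
Qed.

Lemma pi_half_cases x :
  (exists k, lam x = IZR (2 * k + 1) /\ pi_half B x = 1) \/
  (exists k, lam x = IZR (2 * k) /\ pi_half B x = 0) \/
  (exists m, lam x = IZR m + pi_half B x /\ 0 < pi_half B x < 1).
Proof.
  destruct (Q2R_int_frac (hamel_coef B (/2) x)) as [m [a [s [H Ha]]]]. fold (lam x) in H.
  destruct (Z.eq_dec a 0) as [-> | Ha0].
  - unfold Rdiv in H. rewrite Rmult_0_l, Rplus_0_r in H.
    destruct (Z.Even_or_Odd m) as [[k ->] | [k ->]].
    + right; left. exists k. split; auto. apply (pi_half_even x k H).
    + left. exists k. split; auto. apply (pi_half_odd x k H).
  - right; right. pose proof (IZR_div_bounds a (Zpos s) ltac:(lia)) as Hr.
    exists m. rewrite (pi_half_open x m _ H Hr). auto.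
Qed.

Lemma pi_half_nonneg x : 0 <= pi_half B x.
Proof. destruct (pi_half_cases x) as [[k [_ ->]] | [[k [_ ->]] | [m [_ H]]]]; lra. Qed.

Lemma lsum_pi_half_no_odd xs : (forall x, In x xs -> forall k, lam x <> IZR (2 * k + 1)) ->
  exists N, lsum xs (pi_half B) = lsum xs lam - IZR N /\
    (lsum xs (pi_half B) = 0 -> exists k, lsum xs lam = IZR (2 * k)).
Proof.
  induction xs as [| x xs IH]; intros Hno.
  - exists 0%Z. simpl. split; [lra |]. intros _; exists 0%Z; simpl; lra.
  - destruct IH as [N [HN Hzero]]; [intros y Hy; apply Hno; simpl; auto |].
    assert (Hrest : 0 <= lsum xs (pi_half B)) by (apply lsum_nonneg; intros; apply pi_half_nonneg).
    rewrite !lsum_cons. destruct (pi_half_cases x) as [[k [Hk _]] | [[k [Hk Hp]] | [m [Hm Hp]]]].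
    + exfalso. apply (Hno x (or_introl eq_refl) k Hk).
    + exists (2 * k + N)%Z. rewrite Hp, plus_IZR. split; [lra |].
      intros H0. destruct (Hzero ltac:(lra)) as [k' Hk'].
      exists (k + k')%Z. rewrite Hk, Hk', <- plus_IZR. f_equal. lia.
    + exists (m + N)%Z. rewrite plus_IZR. split; [lra |]. intros H0. lra.
Qed.

End PiHalf.

Section HalfInBasis.

Variable B : R -> Prop.
Hypothesis HB : is_Hamel_basis B.
Hypothesis Hb : B (/2).
Local Notation lam := (coef B (/2)).

Lemma lam_half_multiple q : lam (Q2R q * /2) = Q2R q.
Proof. exact (coef_basis_multiple B (/2) HB Hb q). Qed.

Lemma lam_half : lam (/2) = 1.
Proof.
  pose proof (lam_half_multiple 1) as H.
  rewrite RMicromega.Q2R_1, Rmult_1_l in H. exact H.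
Qed.

Lemma lam_IZR k : lam (IZR k) = IZR (2 * k).
Proof.
  replace (IZR k) with (Q2R (inject_Z (2 * k)) * /2)
    by (rewrite Q2R_inject_Z, mult_IZR; simpl; field).
  rewrite lam_half_multiple, Q2R_inject_Z. reflexivity.
Qed.

Lemma lam_lsum_Ib xs k : lsum xs (fun x => x) - /2 = IZR k -> lsum xs lam = IZR (2 * k + 1).
Proof.
  intros Hk. rewrite <- coef_lsum by auto.
  replace (lsum xs (fun x => x)) with (/2 + IZR k) by lra.
  rewrite coef_add, lam_half, lam_IZR, plus_IZR by auto. simpl. ring.
Qed.

Lemma pi_half_valid : valid (/2) (pi_half B).
Proof.
  apply valid_of_valid_multiset; [apply pi_half_nonneg |]. intros xs [k Hk].
  apply lam_lsum_Ib in Hk.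
  assert (Hnn : forall x, In x xs -> 0 <= pi_half B x) by (intros; apply pi_half_nonneg).
  destruct (classic (exists x, In x xs /\ exists k', lam x = IZR (2 * k' + 1)))
    as [[x [Hx [k' Hk']]] | Hno].
  - pose proof (lsum_ge_in xs (pi_half B) x Hnn Hx) as Hge.
    rewrite (pi_half_odd B x k' Hk') in Hge. lra.
  - destruct (lsum_pi_half_no_odd B xs) as [N [HN Hzero]].
    { intros x Hx k' Hk'. apply Hno. eauto. }
    pose proof (lsum_nonneg xs (pi_half B) Hnn) as H0.
    rewrite Hk, <- minus_IZR in HN. rewrite HN in *.
    destruct (Z.eq_dec (2 * k + 1 - N) 0) as [E | E].
    + exfalso. rewrite E in Hzero. destruct (Hzero eq_refl) as [k2 Hk2].
      rewrite Hk in Hk2. apply eq_IZR in Hk2. lia.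
    + apply le_IZR in H0. apply Rle_ge, IZR_le. lia.
Qed.

Definition unit_point (s : positive) : R := Q2R (1 # s) * /2.

Lemma lam_unit_point s : lam (unit_point s) = / IZR (Zpos s).
Proof. unfold unit_point. rewrite lam_half_multiple. unfold Q2R; simpl. ring. Qed.

Lemma pi_half_unit_point s : (1 < Zpos s)%Z -> pi_half B (unit_point s) = / IZR (Zpos s).
Proof.
  intros Hs. apply (pi_half_open B _ 0); rewrite ?lam_unit_point;
    [ring | pose proof (IZR_div_bounds 1 (Zpos s) ltac:(lia)) as H; unfold Rdiv in H; lra].
Qed.

Section Extremality.

Variables p1 p2 : R -> R.
Hypotheses (V1 : valid (/2) p1) (V2 : valid (/2) p2).
Hypothesis Hmid : forall x, pi_half B x = /2 * p1 x + /2 * p2 x.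

Lemma tight_multiset xs k :
  lsum xs lam = IZR (2 * k + 1) -> lsum xs (pi_half B) = 1 -> lsum xs p1 = 1.
Proof.
  intros Hk Hp.
  set (e := /2 - lsum xs (fun x => x)).
  assert (He : lam e = IZR (2 * - k)).
  { unfold e. rewrite coef_sub, lam_half, coef_lsum, Hk by auto.
    rewrite plus_IZR, !mult_IZR, opp_IZR. simpl. ring. }
  pose proof (pi_half_even B e _ He) as Hpe. rewrite Hmid in Hpe.
  pose proof (proj1 V1 e). pose proof (proj1 V2 e).
  assert (HIb : exists k0, lsum (xs ++ e :: nil) (fun x => x) - /2 = IZR k0)
    by (exists 0%Z; rewrite lsum_app, lsum_cons, lsum_nil; unfold e; ring).
  pose proof (valid_multiset_of_valid _ _ V1 _ HIb) as H1.
  pose proof (valid_multiset_of_valid _ _ V2 _ HIb) as H2.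
  rewrite lsum_app, lsum_cons, lsum_nil in H1, H2.
  rewrite (lsum_ext xs _ _ Hmid), lsum_plus, !lsum_scal in Hp.
  lra.
Qed.

Lemma p1_unit_point s : (1 < Zpos s)%Z -> p1 (unit_point s) = / IZR (Zpos s).
Proof.
  intros Hs. assert (HS : IZR (Zpos s) <> 0) by (apply not_0_IZR; lia).
  pose proof (tight_multiset (repeat (unit_point s) (Pos.to_nat s)) 0) as T.
  rewrite !lsum_repeat, INR_IZR_INZ, positive_nat_Z, lam_unit_point, pi_half_unit_point in T
    by auto.
  assert (IZR (Zpos s) * p1 (unit_point s) = 1) by (apply T; simpl; field; auto).
  apply (Rmult_eq_reg_l (IZR (Zpos s))); auto. rewrite Rinv_r; auto.
Qed.

Lemma lsum_p1_eq_pi_half xs k c (s : positive) : (1 < Zpos s)%Z -> (0 <= c)%Z ->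
  lsum xs lam = IZR (2 * k + 1) - IZR c / IZR (Zpos s) ->
  lsum xs (pi_half B) = 1 - IZR c / IZR (Zpos s) ->
  lsum xs p1 = lsum xs (pi_half B).
Proof.
  intros Hs Hc Hlam Hpi.
  (* padding [xs] with [c] copies of [unit_point s] makes it tight *)
  pose proof (tight_multiset (xs ++ repeat (unit_point s) (Z.to_nat c)) k) as T.
  rewrite !lsum_app, !lsum_repeat, INR_IZR_INZ, Z2Nat.id, lam_unit_point,
    pi_half_unit_point, p1_unit_point, Hlam, Hpi in T by auto.
  unfold Rdiv in *. assert (lsum xs p1 + IZR c * / IZR (Zpos s) = 1) by (apply T; ring).
  lra.
Qed.

Lemma p1_even_frac x k a (s : positive) :
  lam x = IZR (2 * k) + IZR a / IZR (Zpos s) -> (0 < a < Zpos s)%Z -> p1 x = pi_half B x.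
Proof.
  intros Hlam Ha. assert (HS : IZR (Zpos s) <> 0) by (apply not_0_IZR; lia).
  pose proof (pi_half_open B x _ _ Hlam (IZR_div_bounds _ _ Ha)) as Hpi.
  pose proof (lsum_p1_eq_pi_half (x :: nil) k (Zpos s - a) s) as H.
  rewrite !lsum_cons, !lsum_nil, !Rplus_0_r in H.
  apply H; [lia | lia | rewrite Hlam | rewrite Hpi];
    rewrite ?plus_IZR, minus_IZR; field; auto.
Qed.

Lemma p1_odd_frac_le_half x k a (s : positive) :
  lam x = IZR (2 * k + 1) + IZR a / IZR (Zpos s) -> (0 < a)%Z -> (2 * a <= Zpos s)%Z ->
  p1 x = pi_half B x.
Proof.
  intros Hlam Ha Has. assert (HS : IZR (Zpos s) <> 0) by (apply not_0_IZR; lia).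
  pose proof (pi_half_open B x _ _ Hlam (IZR_div_bounds a (Zpos s) ltac:(lia))) as Hpi.
  pose proof (lsum_p1_eq_pi_half (x :: x :: nil) (2 * k + 1) (Zpos s - 2 * a) s) as H.
  rewrite !lsum_cons, !lsum_nil, !Rplus_0_r in H.
  enough (p1 x + p1 x = pi_half B x + pi_half B x) by lra.
  apply H; [lia | lia | rewrite Hlam | rewrite Hpi];
    repeat rewrite ?plus_IZR, ?minus_IZR, ?mult_IZR; field; auto.
Qed.

Lemma p1_odd_frac_gt_half x k a (s : positive) :
  lam x = IZR (2 * k + 1) + IZR a / IZR (Zpos s) -> (Zpos s < 2 * a)%Z -> (a < Zpos s)%Z ->
  p1 x = pi_half B x.
Proof.
  intros Hlam Has Ha. assert (HS : IZR (Zpos s) <> 0) by (apply not_0_IZR; lia).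
  (* [w] falls under the previous case and completes [x] to a tight pair *)
  set (w := Q2R (1 - hamel_coef B (/2) x) * /2).
  assert (Hw : lam w = IZR (2 * (- k - 1) + 1) + IZR (Zpos s - a) / IZR (Zpos s)).
  { unfold w. rewrite lam_half_multiple, Q2R_minus, RMicromega.Q2R_1.
    fold (lam x). rewrite Hlam, !plus_IZR, !mult_IZR, !minus_IZR, opp_IZR. field; auto. }
  pose proof (p1_odd_frac_le_half w _ _ s Hw ltac:(lia) ltac:(lia)) as Hp1w.
  pose proof (pi_half_open B x _ _ Hlam (IZR_div_bounds a (Zpos s) ltac:(lia))) as Hpi.
  pose proof (pi_half_open B w _ _ Hw (IZR_div_bounds (Zpos s - a) (Zpos s) ltac:(lia))) as Hpiw.
  assert (Hsum : pi_half B x + pi_half B w = 1)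
    by (rewrite Hpi, Hpiw, minus_IZR; field; auto).
  pose proof (tight_multiset (x :: w :: nil) 0) as H.
  rewrite !lsum_cons, !lsum_nil, !Rplus_0_r in H.
  enough (p1 x + p1 w = 1) by lra.
  apply H; [rewrite Hlam, Hw | exact Hsum].
  repeat rewrite ?plus_IZR, ?minus_IZR, ?mult_IZR, ?opp_IZR. field; auto.
Qed.

Lemma p1_eq_pi_half x : p1 x = pi_half B x.
Proof.
  destruct (Q2R_int_frac (hamel_coef B (/2) x)) as [m [a [s [Hlam Ha]]]].
  fold (lam x) in Hlam.
  destruct (Z.eq_dec a 0) as [-> | Ha0].
  - unfold Rdiv in Hlam. rewrite Rmult_0_l, Rplus_0_r in Hlam.
    destruct (Z.Even_or_Odd m) as [[k ->] | [k ->]].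
    + pose proof (pi_half_even B x k Hlam) as Hpi. pose proof (Hmid x).
      pose proof (proj1 V1 x). pose proof (proj1 V2 x). lra.
    + pose proof (tight_multiset (x :: nil) k) as H.
      rewrite !lsum_cons, !lsum_nil, !Rplus_0_r, (pi_half_odd B x k Hlam) in *.
      apply H; auto.
  - destruct (Z.Even_or_Odd m) as [[k ->] | [k ->]].
    + apply (p1_even_frac x k a s); auto; lia.
    + destruct (Z_le_gt_dec (2 * a) (Zpos s)).
      * apply (p1_odd_frac_le_half x k a s); auto; lia.
      * apply (p1_odd_frac_gt_half x k a s); auto; lia.
Qed.

End Extremality.

End HalfInBasis.

Theorem mainTheorem3 (B : R -> Prop) (HB : is_Hamel_basis B) (Hb : B (/2)) :
  extreme (/2) (pi_half B).
Proof.
  split; [exact (pi_half_valid B HB Hb) |].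
  intros p1 p2 V1 V2 Hmid. split; intro x.
  - exact (p1_eq_pi_half B HB Hb p1 p2 V1 V2 Hmid x).
  - apply (p1_eq_pi_half B HB Hb p2 p1 V2 V1). intro y. rewrite Hmid. ring.
Qed.
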